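(* For every level $t \in \mathcal{L}$ there exist finitely many levels $u_1, \ldots, u_n$, each generated by the grammar $u ::= s^k(x) \mid s^k(0) \mid \operatorname{imax}(u, x)$ (with $k \in \mathbb{N}$ and $x \in \mathcal{X}$), such that $t =_{\mathcal{L}} \max(u_1, \ldots, u_n)$.
   Context: $\operatorname{imax}\colon \mathbb{N}\times\mathbb{N}\to\mathbb{N}$ is defined by $\operatorname{imax}(i,0)=0$ and $\operatorname{imax}(i,j+1)=\max(i,j+1)$. Levels are the terms of the grammar $t ::= x \mid 0 \mid s(t) \mid \max(t,t) \mid \operatorname{imax}(t,t)$, where $x$ ranges over a countable set of variables $\mathcal{X}$; $\mathcal{L}$ denotes the set of levels; $s^k$ denotes $k$ applications of $s$. A valuation is a function $\sigma\colon\mathcal{X}\to\mathbb{N}$; the value $[t]_\sigma$ is defined by $[0]_\sigma=0$, $[x]_\sigma=\sigma(x)$, $[s(t)]_\sigma=[t]_\sigma+1$, $[\max(t_1,t_2)]_\sigma=\max([t_1]_\sigma,[t_2]_\sigma)$, $[\operatorname{imax}(t_1,t_2)]_\sigma=\operatorname{imax}([t_1]_\sigma,[t_2]_\sigma)$. $t_1 =_{\mathcal{L}} t_2$ means $[t_1]_\sigma=[t_2]_\sigma$ for every valuation $\sigma$. *)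

From Stdlib Require Import Arith List.
Import ListNotations.

Inductive level : Type :=
| LVar : nat -> level
| LZero : level
| LSucc : level -> level
| LMax : level -> level -> level
| LIMax : level -> level -> level.

Definition imax (i j : nat) : nat :=
  match j with 0 => 0 | S _ => Nat.max i j end.

Fixpoint eval (sigma : nat -> nat) (t : level) : nat :=
  match t with
  | LVar x => sigma x
  | LZero => 0
  | LSucc t => S (eval sigma t)
  | LMax a b => Nat.max (eval sigma a) (eval sigma b)
  | LIMax a b => imax (eval sigma a) (eval sigma b)
  end.

Definition level_eq (t1 t2 : level) : Prop :=
  forall sigma : nat -> nat, eval sigma t1 = eval sigma t2.

Fixpoint succn (k : nat) (t : level) : level :=
  match k with 0 => t | S k => LSucc (succn k t) end.

Inductive is_u : level -> Prop :=
| u_svar : forall k x, is_u (succn k (LVar x))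
| u_szero : forall k, is_u (succn k LZero)
| u_imax : forall u x, is_u u -> is_u (LIMax u (LVar x)).

Fixpoint max_list (u : level) (us : list level) : level :=
  match us with
  | [] => u
  | v :: vs => LMax u (max_list v vs)
  end.

From Stdlib Require Import List Lia.
Import ListNotations.

(* Say a function of the valuation is u-expressible when it is the value of
   the maximum of a finite list of u-levels (the empty maximum being 0); every
   level is then shown u-expressible by induction.  Successor and imax(_, g)
   distribute over max, so they need only be pushed through single u-levels,
   using imax(a, imax(b, c)) = imax(max(a, b), c) and
   s(imax(b, c)) = max(1, imax(s b, c), imax(s c, c)); pushing imax(_, x)
   through a list needs the extra member x, since imax(0, x) = x, not 0. *)

Lemma imax_0_l c : imax 0 c = c.
Proof. now destruct c. Qed.

Lemma imax_pos_r a b : 0 < b -> imax a b = Nat.max a b.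
Proof. now destruct b; [lia|]. Qed.

Lemma imax_maxl a b c : imax (Nat.max a b) c = Nat.max (imax a c) (imax b c).
Proof. destruct c; [reflexivity|]. rewrite !imax_pos_r by lia. lia. Qed.

Lemma imax_maxr a b c : imax a (Nat.max b c) = Nat.max (imax a b) (imax a c).
Proof. destruct b, c; simpl; lia. Qed.

Lemma imax_imax a b c : imax a (imax b c) = imax (Nat.max a b) c.
Proof.
  destruct c; [reflexivity|].
  rewrite (imax_pos_r b), !imax_pos_r by lia. lia.
Qed.

Lemma succ_imax b c :
  S (imax b c) = Nat.max 1 (Nat.max (imax (S b) c) (imax (S c) c)).
Proof. destruct c; [reflexivity|]. rewrite !imax_pos_r by lia. lia. Qed.

Definition eval_list (sigma : nat -> nat) (L : list level) : nat :=
  fold_right (fun u acc => Nat.max (eval sigma u) acc) 0 L.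

Lemma eval_list_app sigma L1 L2 :
  eval_list sigma (L1 ++ L2) = Nat.max (eval_list sigma L1) (eval_list sigma L2).
Proof. induction L1 as [|a L1 IH]; simpl; [reflexivity|]. rewrite IH. lia. Qed.

Lemma eval_max_list sigma u us :
  eval sigma (max_list u us) = Nat.max (eval sigma u) (eval_list sigma us).
Proof.
  revert u; induction us as [|v vs IH]; intro u; simpl.
  - lia.
  - now rewrite IH.
Qed.

Lemma eval_succn sigma k t : eval sigma (succn k t) = k + eval sigma t.
Proof. induction k; simpl; lia. Qed.

Definition u_expressible (f : (nat -> nat) -> nat) : Prop :=
  exists L, Forall is_u L /\ forall sigma, f sigma = eval_list sigma L.

Lemma u_expressible_ext f g :
  (forall sigma, f sigma = g sigma) -> u_expressible f -> u_expressible g.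
Proof.
  intros Efg [L [HL E]]. exists L. split; [exact HL|].
  intro sigma. now rewrite <- Efg.
Qed.

Lemma u_expressible_0 : u_expressible (fun _ => 0).
Proof. exists []. split; [constructor | reflexivity]. Qed.

Lemma u_expressible_u u : is_u u -> u_expressible (fun sigma => eval sigma u).
Proof.
  intro Hu. exists [u]. split; [now constructor|].
  intro sigma; simpl; lia.
Qed.

Lemma u_expressible_max f g :
  u_expressible f -> u_expressible g ->
  u_expressible (fun sigma => Nat.max (f sigma) (g sigma)).
Proof.
  intros [L1 [H1 E1]] [L2 [H2 E2]]. exists (L1 ++ L2). split.
  - now apply Forall_app.
  - intro sigma. now rewrite eval_list_app, E1, E2.
Qed.

Lemma u_expressible_imax_var f x :
  u_expressible f -> u_expressible (fun sigma => imax (f sigma) (sigma x)).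
Proof.
  intros [L [HL E]]. exists (LVar x :: map (fun u => LIMax u (LVar x)) L). split.
  - constructor; [exact (u_svar 0 x)|].
    apply Forall_map. eapply Forall_impl; [|exact HL]. intros u Hu. now constructor.
  - intro sigma. rewrite E. simpl. clear E HL.
    induction L as [|a L IH]; simpl.
    + rewrite imax_0_l. lia.
    + rewrite imax_maxl, IH. lia.
Qed.

Lemma u_expressible_imax_u f u :
  u_expressible f -> is_u u ->
  u_expressible (fun sigma => imax (f sigma) (eval sigma u)).
Proof.
  intros Hf Hu. destruct Hu as [[|k] x|[|k]|v x Hv].
  - exact (u_expressible_imax_var f x Hf).
  - apply (u_expressible_ext
             (fun sigma => Nat.max (f sigma) (eval sigma (succn (S k) (LVar x))))).
    + intro sigma. rewrite imax_pos_r; [reflexivity|]. rewrite eval_succn. lia.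
    + apply u_expressible_max; [exact Hf | apply u_expressible_u, u_svar].
  - apply (u_expressible_ext (fun _ => 0)); [reflexivity | exact u_expressible_0].
  - apply (u_expressible_ext
             (fun sigma => Nat.max (f sigma) (eval sigma (succn (S k) LZero)))).
    + intro sigma. rewrite imax_pos_r; [reflexivity|]. rewrite eval_succn. lia.
    + apply u_expressible_max; [exact Hf | apply u_expressible_u, u_szero].
  - apply (u_expressible_ext
             (fun sigma => imax (Nat.max (f sigma) (eval sigma v)) (sigma x))).
    + intro sigma. symmetry. apply imax_imax.
    + apply u_expressible_imax_var, u_expressible_max;
        [exact Hf | now apply u_expressible_u].
Qed.

Lemma u_expressible_imax f g :
  u_expressible f -> u_expressible g ->
  u_expressible (fun sigma => imax (f sigma) (g sigma)).
Proof.
  intros Hf [L [HL E]].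
  apply (u_expressible_ext (fun sigma => imax (f sigma) (eval_list sigma L))).
  { intro sigma. now rewrite E. }
  clear E. induction HL as [|u L Hu HL IH]; simpl.
  - apply (u_expressible_ext (fun _ => 0)); [reflexivity | exact u_expressible_0].
  - apply (u_expressible_ext
             (fun sigma => Nat.max (imax (f sigma) (eval sigma u))
                                   (imax (f sigma) (eval_list sigma L)))).
    + intro sigma. symmetry. apply imax_maxr.
    + apply u_expressible_max; [now apply u_expressible_imax_u | exact IH].
Qed.

Lemma u_expressible_succ_u u :
  is_u u -> u_expressible (fun sigma => S (eval sigma u)).
Proof.
  induction 1 as [k x|k|v x Hv IH].
  - exact (u_expressible_u _ (u_svar (S k) x)).
  - exact (u_expressible_u _ (u_szero (S k))).
  - apply (u_expressible_ext
             (fun sigma => Nat.max (eval sigma (succn 1 LZero))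
                (Nat.max (imax (S (eval sigma v)) (sigma x))
                         (eval sigma (LIMax (succn 1 (LVar x)) (LVar x)))))).
    + intro sigma. simpl. symmetry. apply succ_imax.
    + apply u_expressible_max; [apply u_expressible_u, u_szero|].
      apply u_expressible_max; [now apply u_expressible_imax_var|].
      apply u_expressible_u, u_imax, u_svar.
Qed.

Lemma u_expressible_succ f :
  u_expressible f -> u_expressible (fun sigma => S (f sigma)).
Proof.
  intros [L [HL E]].
  apply (u_expressible_ext (fun sigma => S (eval_list sigma L))).
  { intro sigma. now rewrite E. }
  clear E. induction HL as [|u L Hu HL IH]; simpl.
  - exact (u_expressible_u _ (u_szero 1)).
  - apply (u_expressible_ext
             (fun sigma => Nat.max (S (eval sigma u)) (S (eval_list sigma L)))).
    + intro sigma. lia.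
    + apply u_expressible_max; [now apply u_expressible_succ_u | exact IH].
Qed.

Lemma u_expressible_eval t : u_expressible (fun sigma => eval sigma t).
Proof.
  induction t as [x| |t IH|a IHa b IHb|a IHa b IHb]; simpl.
  - exact (u_expressible_u _ (u_svar 0 x)).
  - exact u_expressible_0.
  - now apply u_expressible_succ.
  - now apply u_expressible_max.
  - now apply u_expressible_imax.
Qed.

Theorem theorem18 : forall t : level,
  exists (u : level) (us : list level),
    is_u u /\ Forall is_u us /\ level_eq t (max_list u us).
Proof.
  intro t. destruct (u_expressible_eval t) as [L [HL E]].
  exists (succn 0 LZero), L. split; [apply u_szero|]. split; [exact HL|].
  intro sigma. rewrite eval_max_list, E. reflexivity.
Qed.
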